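(* Let $\mathbb{T}$ be a time scale, $c\in\mathbb{R}$ a constant, $m\in\mathbb{N}$ ($m\ge1$), $\alpha\in\,]0,1]$, and $t\in\mathbb{T}_\kappa$. (i) If $f(t)=(t-c)^m$, then $$f^{\nabla^\alpha}(t)=\begin{cases}[t-\rho(t)]^{1-\alpha}\sum_{\nu=0}^{m-1}[\rho(t)-c]^\nu(t-c)^{m-1-\nu}&\text{if }\alpha\neq1,\\ \sum_{\nu=0}^{m-1}[\rho(t)-c]^\nu(t-c)^{m-1-\nu}&\text{if }\alpha=1.\end{cases}$$ (ii) If $g(t)=\frac1{(t-c)^m}$, then, provided $[\rho(t)-c](t-c)\neq0$, $$g^{\nabla^\alpha}(t)=\begin{cases}-[t-\rho(t)]^{1-\alpha}\sum_{\nu=0}^{m-1}\frac{1}{[\rho(t)-c]^{m-\nu}(t-c)^{\nu+1}}&\text{if }\alpha\neq1,\\ -\sum_{\nu=0}^{m-1}\frac{1}{[\rho(t)-c]^{m-\nu}(t-c)^{\nu+1}}&\text{if }\alpha=1.\end{cases}$$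
   Context: A time scale $\mathbb{T}$ is a nonempty closed subset of $\mathbb{R}$. $\rho(t)=\sup\{s\in\mathbb{T}: s<t\}$ (with $\sup\emptyset=\inf\mathbb{T}$), $\sigma(t)=\inf\{s\in\mathbb{T}:s>t\}$ (with $\inf\emptyset=\sup\mathbb{T}$), $f^\rho=f\circ\rho$. $\mathbb{T}_\kappa=\mathbb{T}\setminus\{\inf\mathbb{T}\}$ if $\inf\mathbb{T}$ is finite with $\sigma(\inf\mathbb{T})>\inf\mathbb{T}$, otherwise $\mathbb{T}_\kappa=\mathbb{T}$. $0^\gamma=0$ for $\gamma>0$. Let $A=\,]0,1]\cap\{1/q: q\text{ odd positive integer}\}$; for $\alpha=1/q\in A$, $x^\alpha$ is the real $q$-th root. For $t\in\mathbb{T}_\kappa$, $f^{\nabla^\alpha}(t)$ is the real number (if it exists) such that for every $\varepsilon>0$ there is $\delta>0$ with $\big|[f(s)-f^\rho(t)]-f^{\nabla^\alpha}(t)[s-\rho(t)]^\alpha\big|\le\varepsilon|s-\rho(t)|^\alpha$ for all $s\in\,]t-\delta,t+\delta[\,\cap\mathbb{T}$ if $\alpha\in A$, resp. all $s\in[t,t+\delta[\,\cap\mathbb{T}$ if $\alpha\notin A$ (nabla fractional derivative of order $\alpha$). *)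

From HB Require Import structures.
From mathcomp Require Import all_boot all_order all_algebra.
From mathcomp Require Import all_classical all_reals all_analysis.
Set Implicit Arguments. Unset Strict Implicit. Unset Printing Implicit Defensive.
Import Order.TTheory GRing.Theory Num.Theory.
Import numFieldNormedType.Exports.
Local Open Scope classical_set_scope.
Local Open Scope ring_scope.

Section TimeScale.
Variable R : realType.

Definition time_scale (T : set R) : Prop := T !=set0 /\ closed T.

Definition rho (T : set R) (t : R) : R :=
  if pselect ([set s | T s /\ s < t] !=set0) then sup [set s | T s /\ s < t]
  else inf T.

Definition sigma (T : set R) (t : R) : R :=
  if pselect ([set s | T s /\ t < s] !=set0) then inf [set s | T s /\ t < s]
  else sup T.

Definition Tkappa (T : set R) (t : R) : Prop :=
  T t /\ ~ (has_lbound T /\ inf T < sigma T (inf T) /\ t = inf T).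

Definition inA (alpha : R) : Prop := exists q : nat, odd q /\ alpha = (q%:R)^-1.

(* x^alpha: for alpha = 1/q in A, the real (odd) q-th root of x;
   otherwise the usual real power (only used for x >= 0), with 0^g = 0. *)
Definition fpow (alpha x : R) : R :=
  if pselect (inA alpha) then
    (if 0 <= x then x `^ alpha else - ((- x) `^ alpha))
  else x `^ alpha.

Definition nabla_frac_deriv (T : set R) (alpha : R) (f : R -> R) (t D : R) : Prop :=
  forall eps : R, 0 < eps -> exists2 delta : R, 0 < delta &
    forall s : R, T s ->
      (if pselect (inA alpha) then t - delta < s < t + delta
       else t <= s < t + delta) ->
      `| (f s - f (rho T t)) - D * fpow alpha (s - rho T t) |
        <= eps * `| s - rho T t | `^ alpha.

End TimeScale.

From HB Require Import structures.
From mathcomp Require Import all_boot all_order all_algebra.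
From mathcomp Require Import all_classical all_reals all_analysis.
From mathcomp Require Import ring zify.
Import Order.TTheory GRing.Theory Num.Theory.
Import numFieldNormedType.Exports.
Local Open Scope classical_set_scope.
Local Open Scope ring_scope.

(* Both formulas follow from one criterion: if near t one can factor
   f s - f (rho t) = (s - rho t) * G s with G continuous at t, then the nabla
   fractional derivative of order alpha is (t - rho t)^(1 - alpha) * G t.
   Indeed, for s >= rho t, the remainder in the definition is
   |s - rho t|^alpha * |phi s - phi t| with phi s = |s - rho t|^(1 - alpha) * G s,
   and phi is continuous at t (at a left-dense point because
   |s - t|^(1 - alpha) -> 0).  The two functions factor by
   x^m - y^m = (x - y) * sum_nu y^nu x^(m-1-nu) and its reciprocal analogue. *)

Lemma subrXX_sum (F : comPzRingType) (x y : F) (m : nat) :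
  x ^+ m - y ^+ m = (x - y) * \sum_(0 <= nu < m) y ^+ nu * x ^+ (m.-1 - nu).
Proof.
rewrite subrXX big_mkord; congr (_ * _).
by apply: eq_bigr => i _; rewrite mulrC.
Qed.

Lemma subrVXX (F : fieldType) (x y : F) (m : nat) : x != 0 -> y != 0 ->
  (x ^+ m)^-1 - (y ^+ m)^-1 =
  (x - y) * - \sum_(0 <= nu < m) (y ^+ (m - nu) * x ^+ nu.+1)^-1.
Proof.
move=> x0 y0; have xm0 : x ^+ m != 0 by rewrite expf_neq0.
have ym0 : y ^+ m != 0 by rewrite expf_neq0.
have -> : (x ^+ m)^-1 - (y ^+ m)^-1 = - (x ^+ m - y ^+ m) / (x ^+ m * y ^+ m).
  by field; rewrite xm0 ym0.
rewrite subrXX_sum mulNr -mulrA mulrN big_distrl; congr (- (_ * _)).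
apply: eq_big_nat => nu /andP[_ nu_lt_m].
have xE : x ^+ m = x ^+ (m.-1 - nu) * x ^+ nu.+1.
  by rewrite -exprD; congr (_ ^+ _); lia.
have yE : y ^+ m = y ^+ nu * y ^+ (m - nu) by rewrite -exprD subnKC // ltnW.
rewrite xE yE /=; field.
by rewrite !expf_neq0.
Qed.

Lemma continuous_at_sum (R : realType) (F : nat -> R -> R) (m : nat) (t : R) :
  (forall nu, {for t, continuous (F nu)}) ->
  {for t, continuous (fun s => \sum_(0 <= nu < m) F nu s)}.
Proof. by move=> F_cont; apply: cvg_big => [|nu _]; [exact: add_continuous | exact: F_cont]. Qed.

Lemma continuous_subrX (R : realType) (c : R) (k : nat) :
  continuous (fun s : R => (s - c) ^+ k).
Proof.
move=> t; apply: (continuous_comp (f := fun s => s - c) (g := fun x => x ^+ k)).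
  by apply: cvgB; [exact: cvg_id | exact: cvg_cst].
exact: exprn_continuous.
Qed.

Section NablaFractionalDerivative.
Context {R : realType}.
Implicit Types (T : set R) (alpha t : R) (f G : R -> R).

Lemma rho_le T t : T t -> rho T t <= t.
Proof.
move=> Tt; rewrite /rho; case: pselect => [? | none_below].
  by apply: ge_sup => // s [_ /ltW].
apply: ge_inf => //; exists t => s Ts.
by rewrite leNgt; apply/negP => st; apply: none_below; exists s.
Qed.

Lemma fpow1 (x : R) : fpow 1 x = x.
Proof.
rewrite /fpow; case: pselect => [? | notA1].
  case: ifP => [x0 | /negbT x_neg]; first by rewrite powRr1.
  by rewrite powRr1 ?opprK // oppr_ge0 ltW // ltNge.
by exfalso; apply: notA1; exists 1%N; rewrite invr1.
Qed.

Lemma ger0_fpow alpha (x : R) : 0 <= x -> fpow alpha x = x `^ alpha.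
Proof. by move=> x0; rewrite /fpow; case: pselect; rewrite ?x0. Qed.

Lemma continuous_normr_powR (p : R) : 0 <= p -> continuous (fun x : R => `|x| `^ p).
Proof.
move=> p0 x; have [-> | p_neq0] := eqVneq p 0.
  by under eq_fun do rewrite powRr0; exact: cst_continuous.
have [-> | x_neq0] := eqVneq x 0.
  apply/cvgrPdist_lt => e e0; rewrite normr0 powR0 //.
  have root_gt0 : 0 < e `^ p^-1 by rewrite powR_gt0.
  have p_gt0 : 0 < p by rewrite lt_neqAle eq_sym p_neq0.
  have eE : e = (e `^ p^-1) `^ p by rewrite -powRrM mulVf // powRr1 // ltW.
  near=> y; rewrite sub0r normrN ger0_norm ?powR_ge0 // [ltRHS]eE.
  by rewrite gt0_ltr_powR ?nnegrE ?(ltW root_gt0).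
have norm_x : {for x, continuous (fun y : R => `|y|)} by exact: norm_continuous.
have pow_x : {for `|x|, continuous (fun y : R => y `^ p)}.
  apply/differentiable_continuous/derivable1_diffP/derivable_powR.
  by rewrite in_itv /= andbT normr_gt0.
exact: (continuous_comp norm_x pow_x).
Unshelve. all: end_near. Qed.

Lemma powR_split (alpha : R) [a : R] : 0 <= a -> a = a `^ alpha * a `^ (1 - alpha).
Proof.
move=> a0; rewrite -powRD; last by rewrite addrC subrK oner_eq0.
by rewrite addrC subrK powRr1.
Qed.

Lemma normr_sub_fpow_factor alpha (x g D : R) : [\/ 0 <= x, D = 0 | alpha = 1] ->
  `|x * g - D * fpow alpha x| = `|x| `^ alpha * `| `|x| `^ (1 - alpha) * g - D|.
Proof.
case=> [x0 | -> | ->].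
- rewrite ger0_fpow // (ger0_norm x0) {1}(powR_split alpha x0).
  by rewrite -mulrA (mulrC D) -mulrBr normrM ger0_norm ?powR_ge0.
- rewrite mul0r !subr0 !normrM {1}(powR_split alpha (normr_ge0 x)).
  by rewrite (ger0_norm (powR_ge0 _ _)) mulrA.
- by rewrite (fpow1 x) subrr powRr0 mul1r powRr1 // (mulrC D) -mulrBr normrM.
Qed.

Lemma nabla_frac_deriv_near T alpha f t D :
  (forall eps, 0 < eps -> \forall s \near t,
    `|(f s - f (rho T t)) - D * fpow alpha (s - rho T t)|
      <= eps * `|s - rho T t| `^ alpha) ->
  nabla_frac_deriv T alpha f t D.
Proof.
move=> near_bound eps eps_gt0.
have /nbhs_normP [delta /= delta_gt0 ball_bound] := near_bound eps eps_gt0.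
exists delta => // s _ s_window; apply: ball_bound => /=.
rewrite ltr_distlC; case: pselect s_window => // _ /andP[ts ->].
by rewrite andbT (lt_le_trans _ ts) // ltrBlDr ltrDl.
Qed.

Lemma nabla_frac_deriv_factor T alpha f G t :
  alpha <= 1 -> rho T t <= t -> {for t, continuous G} ->
  (\forall s \near t, f s - f (rho T t) = (s - rho T t) * G s) ->
  nabla_frac_deriv T alpha f t ((t - rho T t) `^ (1 - alpha) * G t).
Proof.
move=> alpha_le1 rt G_cont f_factor.
set r := rho T t in rt f_factor *.
pose phi s := `|s - r| `^ (1 - alpha) * G s.
have phi_t : phi t = (t - r) `^ (1 - alpha) * G t by rewrite /phi ger0_norm ?subr_ge0.
have phi_cont : {for t, continuous phi}.
  apply: continuousM G_cont.
  apply: (continuous_comp (f := fun s => s - r) (g := fun x => `|x| `^ (1 - alpha))).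
    by apply: cvgB; [exact: cvg_id | exact: cvg_cst].
  by apply: continuous_normr_powR; rewrite subr_ge0.
(* [fpow] of a negative argument is not |x|^alpha; such s only occur at a
   left-dense point, where phi t = 0, or for alpha = 1. *)
have side : \forall s \near t, [\/ 0 <= s - r, phi t = 0 | alpha = 1].
  have [->|alpha_neq1] := eqVneq alpha 1; first by near=> s; apply: Or33.
  have [r_lt_t | r_eq_t] := ltP r t.
    by near=> s; apply: Or31; rewrite subr_ge0 ltW //; near: s; exact: lt_nbhsr.
  have r_eq : r = t by apply/eqP; rewrite eq_le rt.
  near=> s; apply: Or32.
  by rewrite /phi r_eq subrr normr0 powR0 ?mul0r // subr_eq0 eq_sym.
apply: nabla_frac_deriv_near => eps eps_gt0; rewrite -phi_t.
have /cvgrPdist_lt /(_ eps eps_gt0) phi_close := phi_cont.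
near=> s; rewrite (near f_factor s) // normr_sub_fpow_factor; last exact: (near side s).
rewrite mulrC ler_wpM2r ?powR_ge0 // distrC ltW //.
exact: (near phi_close s).
Unshelve. all: end_near. Qed.

End NablaFractionalDerivative.

Theorem theorem3p11 (R : realType) (T : set R) (c : R) (m : nat) (alpha t : R) :
  time_scale T -> (0 < m)%N -> 0 < alpha <= 1 -> Tkappa T t ->
  nabla_frac_deriv T alpha (fun s => (s - c) ^+ m) t
    (if alpha != 1 then
       (t - rho T t) `^ (1 - alpha) *
         \sum_(0 <= nu < m) (rho T t - c) ^+ nu * (t - c) ^+ (m.-1 - nu)
     else \sum_(0 <= nu < m) (rho T t - c) ^+ nu * (t - c) ^+ (m.-1 - nu))
  /\
  ((rho T t - c) * (t - c) != 0 ->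
   nabla_frac_deriv T alpha (fun s => ((s - c) ^+ m)^-1) t
    (if alpha != 1 then
       - ((t - rho T t) `^ (1 - alpha) *
         \sum_(0 <= nu < m) ((rho T t - c) ^+ (m - nu) * (t - c) ^+ nu.+1)^-1)
     else - \sum_(0 <= nu < m) ((rho T t - c) ^+ (m - nu) * (t - c) ^+ nu.+1)^-1)).
Proof.
move=> _ _ /andP[_ alpha_le1] [Tt _]; have rt : rho T t <= t by exact: rho_le.
set r := rho T t in rt *.
(* Relies on 0 `^ 0 = 1 when t = rho t and alpha = 1. *)
have coefE g : (if alpha != 1 then (t - r) `^ (1 - alpha) * g else g) =
               (t - r) `^ (1 - alpha) * g.
  by case: eqP => [->|] //=; rewrite subrr powRr0 mul1r.
have shift s : (s - c) - (r - c) = s - r by rewrite opprB addrA subrK.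
split.
  pose G s := \sum_(0 <= nu < m) (r - c) ^+ nu * (s - c) ^+ (m.-1 - nu).
  rewrite coefE; apply: (nabla_frac_deriv_factor _ _ _ G) => //.
    apply: continuous_at_sum => nu.
    by apply: continuousM; [exact: cst_continuous | exact: continuous_subrX].
  by near=> s; rewrite subrXX_sum shift.
rewrite mulf_eq0 negb_or => /andP[rc tc]; rewrite -mulrN coefE.
pose G s := - \sum_(0 <= nu < m) ((r - c) ^+ (m - nu) * (s - c) ^+ nu.+1)^-1.
apply: (nabla_frac_deriv_factor _ _ _ G) => //.
  apply: continuousN; apply: continuous_at_sum => nu.
  apply: continuousV; first by rewrite mulf_neq0 ?expf_neq0.
  by apply: continuousM; [exact: cst_continuous | exact: continuous_subrX].
have s_neq_c : \forall s \near t, s - c != 0.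
  apply/nbhs_normP; exists `|t - c|; first by rewrite /= normr_gt0.
  by move=> s /= ts; rewrite subr_eq0; apply: contraTneq ts => ->; rewrite ltxx.
by near=> s; rewrite subrVXX ?shift //; exact: (near s_neq_c s).
Unshelve. all: end_near. Qed.
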